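(* Let $C$ be any quantum gate circuit on $n$ qubits with operator matrix $A\in\mathbb{C}^{2^n\times 2^n}$ (rows and columns indexed by bit strings in $\{0,1\}^n$). Then there exists a Quantum Petri net $Q$ whose reachability set is in bijection with $\{0,1\}^n$ and whose rate matrix, under this identification, satisfies $R_Q=A$.
   Context: Multisets: a multiset over $A$ is a map $s:A\to\mathbb{N}$; $s\le s'$ is componentwise; $1$ is the empty multiset; maps into multisets are lifted additively to multisets. Net structure: $N=(P,T,F)$ with disjoint places $P$ and transitions $T$, a generator $G$ and well-formedness predicate WF selecting generated places $P_G$ and transitions $T_G$ (for place-transition nets $P_G=P$, $T_G=T$, WF always true); flow $F^-,F^+:T_G\to\mathcal{M}(P_G)$ (input/output). A marking is $m\in\mathcal{M}(P_G)$, a concurrence $t\in\mathcal{M}(T_G)$; $t$ is enabled at $m$ if $F^-(t)\le m$ and WF$(m,t)$, and firing gives $m'=m-F^-(t)+F^+(t)$, written $m\xrightarrow{t}_c m'$. A system net $S=(N,M_0)$ has reachability set $\mathcal{R}_0$ = markings reachable from $M_0$ by single-transition firings. A Quantum Petri net is $Q=(S,r)$ with $r:\mathcal{R}_0\times\mathcal{M}(T_G)\to\mathbb{C}$, written $r_m(t)$. Its rate matrix is the $\mathcal{R}_0\times\mathcal{R}_0$ matrix $R_Q[m',m]=\sum_{t:\,m\xrightarrow{t}_c m'} r_m(t)$, the sum over all concurrences $t$ (including the empty concurrence $1$) with $m\xrightarrow{t}_c m'$. *)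

From HB Require Import structures.
From mathcomp Require Import all_boot all_order all_algebra.
Set Implicit Arguments. Unset Strict Implicit. Unset Printing Implicit Defensive.
Import Order.TTheory GRing.Theory Num.Theory.
Local Open Scope ring_scope.

(* Operators on n qubits: 2^n x 2^n complex matrices; rows/columns indexed by
   'I_(2^n), identified with bit strings {0,1}^n. *)
Definition unitary (C : numClosedFieldType) (n : nat) (U : 'M[C]_(2 ^ n)) : bool :=
  U *m (map_mx Num.conj U)^T == 1%:M.

(* A circuit is a finite sequence of gates, each given by its (unitary)
   operator on the full n-qubit space, applied in order. *)
Record circuit (C : numClosedFieldType) (n : nat) := Circuit {
  gates : seq 'M[C]_(2 ^ n);
  gates_unitary : all (@unitary C n) gates }.

(* Operator matrix: the first gate is applied first (rightmost factor). *)
Definition circuit_op (C : numClosedFieldType) (n : nat) (c : circuit C n)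
  : 'M[C]_(2 ^ n) :=
  foldl (fun acc g => g *m acc) 1%:M (gates c).

(* A net given directly by its generated places P_G and transitions T_G,
   the flow functions F^-, F^+ and the well-formedness predicate WF. *)
Record net := Net {
  place : finType;
  trans : finType;
  Fin  : trans -> {ffun place -> nat};
  Fout : trans -> {ffun place -> nat};
  WF   : {ffun place -> nat} -> {ffun trans -> nat} -> bool }.

Definition marking (N : net) := {ffun place N -> nat}.
Definition conc (N : net) := {ffun trans N -> nat}.

Definition liftF (N : net) (F : trans N -> {ffun place N -> nat}) (t : conc N)
  : marking N := [ffun p => (\sum_(x : trans N) t x * F x p)%N].

Definition mle (N : net) (a b : marking N) : bool := [forall p, (a p <= b p)%N].

Definition enabled (N : net) (m : marking N) (t : conc N) : bool :=
  mle (liftF (@Fin N) t) m && WF m t.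

Definition fires (N : net) (m : marking N) (t : conc N) (m' : marking N) : bool :=
  enabled m t &&
  (m' == [ffun p => (m p - liftF (@Fin N) t p + liftF (@Fout N) t p)%N]).

Definition single (N : net) (x : trans N) : conc N := [ffun y => nat_of_bool (y == x)].

Inductive reachable (N : net) (M0 : marking N) : marking N -> Prop :=
| reach0 : reachable M0 M0
| reachS m x m' : reachable M0 m -> fires m (single x) m' -> reachable M0 m'.

(* Quantum Petri net Q = (S, r), S = (N, M0). r_m(t) is given for every
   marking m; only its values on the reachability set matter. *)
Record qpn (C : numClosedFieldType) := QPN {
  qnet : net;
  M0 : marking qnet;
  rate : marking qnet -> conc qnet -> C }.

Definition reach_set (C : numClosedFieldType) (Q : qpn C) (m : marking (qnet Q)) : Prop :=
  reachable (@M0 C Q) m.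

(* R_Q[m', m] = v : v is the sum of r_m(t) over all concurrences t with
   m --t-->_c m' (zero terms omitted; the set of nonzero terms is finite). *)
Definition rate_entry (C : numClosedFieldType) (Q : qpn C)
  (m' m : marking (qnet Q)) (v : C) : Prop :=
  exists s : seq (conc (qnet Q)),
    [/\ uniq s,
        (forall t, t \in s -> fires m t m'),
        (forall t, fires m t m' -> @rate C Q m t != 0 -> t \in s)
      & v = \sum_(t <- s) @rate C Q m t].

(* Take one place per basis state and one transition (i, j) per matrix entry,
   moving a single token from place j to place i.  The well-formedness
   predicate only admits a single transition fired from the one-token marking
   of its input place, so the reachable markings are exactly the one-token
   markings and m_j fires to m_i only through (i, j); giving that firing the
   rate A i j makes the rate matrix equal to A. *)
From HB Require Import structures.
From mathcomp Require Import all_boot all_order all_algebra.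
Set Implicit Arguments. Unset Strict Implicit. Unset Printing Implicit Defensive.
Import GRing.Theory Num.Theory.
Local Open Scope ring_scope.

Lemma liftF_single (N : net) (F : trans N -> marking N) (x : trans N) :
  liftF F (single x) = F x.
Proof.
apply/ffunP => p; rewrite ffunE (bigD1 x) //= big1 ?addn0.
  by rewrite ffunE eqxx mul1n.
by move=> y /negbTE yx; rewrite ffunE yx mul0n.
Qed.

Lemma single_inj (N : net) : injective (@single N).
Proof.
move=> x y exy; have := congr1 (fun t : conc N => t x) exy.
by rewrite !ffunE eqxx; case: eqP.
Qed.

Section TokenNet.
Variable I : finType.

Definition token_at (i : I) : {ffun I -> nat} := [ffun p => nat_of_bool (p == i)].

Lemma token_at_inj : injective token_at.
Proof.
move=> i k eik; have := congr1 (fun m : {ffun I -> nat} => m i) eik.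
by rewrite !ffunE eqxx; case: eqP.
Qed.

(* The first conjunct says [t = single x], spelled out since the net is not yet built. *)
Definition token_WF (m : {ffun I -> nat}) (t : {ffun I * I -> nat}) : bool :=
  [exists x : I * I, (t == [ffun y => nat_of_bool (y == x)]) && (m == token_at x.2)].

Definition token_net : net :=
  @Net I (I * I)%type (fun x => token_at x.2) (fun x => token_at x.1) token_WF.

Definition jump (i j : I) : trans token_net := (i, j).

Lemma token_net_fires (m : marking token_net) (t : conc token_net) m' :
  fires m t m' <->
  exists x : trans token_net, [/\ t = single x, m = token_at x.2 & m' = token_at x.1].
Proof.
have move_token (x : I * I) :
    [ffun p => (token_at x.2 p - token_at x.2 p + token_at x.1 p)%N] = token_at x.1.
  by apply/ffunP => p; rewrite ffunE subnn.
split.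
  case/andP => /andP [_ /existsP [x /andP [/eqP tx /eqP mx]]] /eqP ->.
  exists x; split => //.
  by rewrite tx !liftF_single mx move_token.
case=> x [-> -> ->]; apply/andP; split.
  apply/andP; split; first by apply/forallP => p; rewrite liftF_single.
  by apply/existsP; exists x; rewrite !eqxx.
by rewrite !liftF_single move_token.
Qed.

Lemma token_net_fires_between (i j : I) (t : conc token_net) :
  fires (token_at j : marking token_net) t (token_at i) <-> t = single (jump i j).
Proof.
split=> [/token_net_fires [[a b] [-> /token_at_inj /= <- /token_at_inj /= <-]] //|->].
by apply/token_net_fires; exists (jump i j).
Qed.

Lemma token_net_reachable (i0 : I) (m : marking token_net) :
  reachable (token_at i0 : marking token_net) m <-> exists i, m = token_at i.
Proof.
split.
  elim=> [|m1 x m' _ _ /token_net_fires [y [_ _ ->]]]; first by exists i0.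
  by exists y.1.
case=> i ->; apply: (@reachS _ _ _ (jump i i0)); first exact: reach0.
exact/token_net_fires_between.
Qed.

Variables (C : numClosedFieldType) (A : I -> I -> C).

Definition matrix_rate (m : marking token_net) (t : conc token_net) : C :=
  \sum_(x : trans token_net) if (t == single x) && (m == token_at x.2) then A x.1 x.2 else 0.

Lemma matrix_rate_single (i j : I) : matrix_rate (token_at j) (single (jump i j)) = A i j.
Proof.
rewrite /matrix_rate (bigD1 (jump i j)) //= !eqxx /= big1 ?addr0 // => x xij.
by case: eqP => //= /(@single_inj token_net) exij; rewrite exij eqxx in xij.
Qed.

Definition matrix_qpn (i0 : I) : qpn C := @QPN C token_net (token_at i0) matrix_rate.

Lemma matrix_qpn_rate_entry (i0 i j : I) :
  @rate_entry C (matrix_qpn i0) (token_at i) (token_at j) (A i j).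
Proof.
exists [:: single (jump i j)]; split => //.
- by move=> t; rewrite inE => /eqP ->; apply/token_net_fires_between.
- by move=> t /token_net_fires_between ->; rewrite inE.
- by rewrite big_seq1 /= matrix_rate_single.
Qed.

End TokenNet.

Theorem theorem1 (C : numClosedFieldType) (n : nat) (c : circuit C n) :
  exists Q : qpn C, exists phi : 'I_(2 ^ n) -> marking (qnet Q),
    [/\ injective phi,
        (forall m, @reach_set C Q m <-> exists i, m = phi i)
      & (forall i j, @rate_entry C Q (phi i) (phi j) (circuit_op c i j))].
Proof.
have i0 : 'I_(2 ^ n) by exists 0%N; rewrite expn_gt0.
exists (matrix_qpn (circuit_op c : 'I_(2 ^ n) -> 'I_(2 ^ n) -> C) i0), (@token_at _).
split.
- exact: token_at_inj.
- exact: token_net_reachable.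
- exact: matrix_qpn_rate_entry.
Qed.
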